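(* For all integers $n\ge0$: \begin{align*} pl_2(2n+1)&\equiv pl_2(2n)\pmod 2,\\ pl_3(3n+2)&\equiv 0\pmod 3,\\ pl_3(3n+1)&\equiv pl_3(3n)\pmod 3,\\ pl_5(5n+2)&\equiv pl_5(5n+4)\pmod 5,\\ pl_5(5n+1)&\equiv pl_5(5n+3)\pmod 5,\\ pl_7(7n+2)+pl_7(7n+3)&\equiv pl_7(7n+4)+pl_7(7n+5)\pmod 7. \end{align*}
   Context: For a positive integer $k$, $pl_k(n)$ denotes the number of $k$-component plane partitions of $n$ (plane partitions of $n$ all of whose entries are $\le k$), with $pl_k(0)=1$ and $pl_k(n)=0$ for $n<0$; equivalently $\sum_{n\ge0}pl_k(n)q^n=\prod_{n=1}^{\infty}(1-q^n)^{-\min(k,n)}$. *)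

From mathcomp Require Import all_boot.
Set Implicit Arguments. Unset Strict Implicit. Unset Printing Implicit Defensive.

(* Coefficient extraction from the generating function
     sum_n pl_k(n) q^n = prod_{m>=1} (1 - q^m)^{-min(k,m)}.
   Using (1 - q^m)^{-c} = sum_{i>=0} 'C(i+c-1, i) q^{m i}:
   plc k m n = [q^n] prod_{j=1}^{m} (1 - q^j)^{-min(k,j)}. *)
Fixpoint plc (k m n : nat) : nat :=
  match m with
  | 0 => (n == 0)
  | m'.+1 =>
      \sum_(0 <= i < (n %/ m).+1)
        'C(i + minn k m - 1, i) * plc k m' (n - m * i)
  end.

(* pl_k(n): factors with m > n do not affect the coefficient of q^n. *)
Definition pl (k n : nat) : nat := plc k n n.

From mathcomp Require Import all_boot.
From mathcomp Require Import all_algebra ring zify.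
Set Implicit Arguments. Unset Strict Implicit. Unset Printing Implicit Defensive.
Import GRing.Theory.

(** Over a ring of characteristic [p], Frobenius turns
    [prod_m (1 - q^m)^min(p,m) * prod_(m<p) (1 - q^m)^(p-m)] into
    [prod_m (1 - q^(p m))], so the generating function of [pl_p] is the
    polynomial [N_p(q) := prod_(m<p) (1 - q^m)^(p-m)] ([pl_numer p.-1] below)
    times a power series in [q^p].  Hence every linear relation between the coefficients of [N_p] in
    the residue classes [p t + a] that holds for all [t] transfers to [pl_p]
    modulo [p]; as [N_p] is an explicit polynomial, this is a finite check. *)

Lemma plc_extend k n d : plc k (n + d) n = pl k n.
Proof.
elim: d => [|d IH]; first by rewrite addn0.
rewrite addnS /= divn_small ?ltnS ?leq_addr // big_nat1 bin0 mul1n muln0 subn0.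
exact: IH.
Qed.

Lemma pl_plc k n N : (n <= N)%N -> pl k n = plc k N n.
Proof. by move=> le_nN; rewrite -(subnKC le_nN) plc_extend. Qed.

Local Open Scope ring_scope.

Lemma sum_multiples (R : nzRingType) m n (F : nat -> R) : (0 < m)%N ->
  \sum_(j < n.+1) (if (m %| j)%N then F j else 0) = \sum_(i < (n %/ m).+1) F (m * i)%N.
Proof.
move=> m_gt0; elim: n => [|n IH].
  by rewrite div0n !big_ord_recr !big_ord0 /= dvdn0 muln0.
rewrite big_ord_recr /= IH divnS //.
case: ifP => dvd_m; last by rewrite addr0.
rewrite add1n [in RHS]big_ord_recr /=; congr (_ + F _).
by have := divnS n m_gt0; rewrite dvd_m add1n => <-; rewrite mulnC divnK.
Qed.

Section TruncatedSeries.
Variable R : comNzRingType.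

Definition eq_upto N (a b : {poly R}) := forall i, (i <= N)%N -> a`_i = b`_i.

Lemma eq_upto_refl N a : eq_upto N a a.
Proof. by []. Qed.

Lemma eq_upto_sym N a b : eq_upto N a b -> eq_upto N b a.
Proof. by move=> eq_ab i le_iN; rewrite eq_ab. Qed.

Lemma eq_upto_trans N a b c : eq_upto N a b -> eq_upto N b c -> eq_upto N a c.
Proof. by move=> eq_ab eq_bc i le_iN; rewrite eq_ab // eq_bc. Qed.

Lemma eq_uptoM N a a' b b' :
  eq_upto N a a' -> eq_upto N b b' -> eq_upto N (a * b) (a' * b').
Proof.
move=> eq_a eq_b i le_iN; rewrite !coefM; apply: eq_bigr => j _.
have le_ji : (j <= i)%N by rewrite -ltnS.
by rewrite eq_a ?eq_b //; apply: leq_trans le_iN; rewrite ?leq_subr.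
Qed.

Lemma eq_upto_prod1 N n (F : 'I_n -> {poly R}) :
  (forall j, eq_upto N (F j) 1) -> eq_upto N (\prod_(j < n) F j) 1.
Proof.
move=> eqF1; apply: (big_ind (fun x => eq_upto N x 1)) => // x y eq_x eq_y.
by rewrite -[1](mulr1 1); apply: eq_uptoM.
Qed.

(* The expansion of [(1 - X^m)^-c] up to degree [N]. *)
Definition invpow N m c : {poly R} :=
  \poly_(i < N.+1) (if (m %| i)%N then ('C(i %/ m + c - 1, i %/ m))%:R else 0).

Lemma coef_invpow N m c i : (i <= N)%N ->
  (invpow N m c)`_i = if (m %| i)%N then ('C(i %/ m + c - 1, i %/ m))%:R else 0.
Proof. by rewrite coef_poly ltnS => ->. Qed.

Lemma invpow0 N m : (0 < m)%N -> eq_upto N (invpow N m 0) 1.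
Proof.
move=> m_gt0 [|i] le_iN; rewrite coef_invpow // coef1 ?dvdn0 ?div0n ?bin0 //.
case: ifP => // dvd_m; rewrite addn0 bin_small // ltn_subrL divn_gt0 //.
exact: dvdn_leq.
Qed.

Lemma invpowS N m c : (0 < m)%N ->
  eq_upto N (invpow N m c.+1 * (1 - 'X^m)) (invpow N m c).
Proof.
move=> m_gt0 i le_iN.
rewrite mulrBr mulr1 coefB coefMXn !coef_invpow ?(leq_trans (leq_subr _ _) le_iN) //.
case: (ltnP i m) => [lt_im | le_mi]; first by rewrite subr0 divn_small // !bin0.
rewrite -(subnK le_mi) addnK dvdn_addl //.
case: ifP => [/dvdnP[k ->] | _]; last by rewrite subrr.
rewrite -mulSnr !mulnK //.
have -> : (k.+1 + c.+1 - 1 = (k + c).+1)%N by lia.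
by rewrite addSn subn1 addnS subn1 /= binS natrD addrK.
Qed.

Lemma invpowK N m c : (0 < m)%N -> eq_upto N (invpow N m c * (1 - 'X^m) ^+ c) 1.
Proof.
move=> m_gt0; elim: c => [|c IH]; first by rewrite mulr1; exact: invpow0.
rewrite exprS mulrA; apply: eq_upto_trans IH.
by apply: eq_uptoM; [exact: invpowS | move].
Qed.

Definition plc_series N k m := \prod_(j < m) invpow N j.+1 (minn k j.+1).

Lemma coef_plc_series N k m n : (n <= N)%N -> (plc_series N k m)`_n = (plc k m n)%:R.
Proof.
elim: m n => [|m IH] n le_nN; first by rewrite /plc_series big_ord0 coef1.
rewrite /plc_series big_ord_recr /= -/(plc_series N k m) mulrC coefM.
pose c j := ('C(j %/ m.+1 + minn k m.+1 - 1, j %/ m.+1))%:R : R.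
rewrite (eq_bigr (fun j : 'I_n.+1 => if (m.+1 %| j)%N
    then c j * (plc_series N k m)`_(n - j) else 0)); last first.
  move=> j _; rewrite coef_invpow; last by apply: leq_trans le_nN; rewrite -ltnS.
  by case: ifP; rewrite ?mul0r.
rewrite (@sum_multiples _ m.+1 n (fun j => c j * (plc_series N k m)`_(n - j))) //.
rewrite natr_sum big_mkord; apply: eq_bigr => i _.
by rewrite /c mulKn // IH ?natrM // (leq_trans (leq_subr _ _)).
Qed.

End TruncatedSeries.

Section Frobenius.
Variables (R : comNzRingType) (p : nat).
Hypothesis pcharRp : p \in [pchar R].

Let p_gt0 : (0 < p)%N := prime_gt0 (pcharf_prime pcharRp).

Definition pl_denom N : {poly R} := \prod_(j < N) (1 - 'X^(j.+1)) ^+ minn p j.+1.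
Definition pl_numer N : {poly R} := \prod_(j < N) (1 - 'X^(j.+1)) ^+ (p - minn p j.+1).
Definition lacunary_inv N := \prod_(j < N) invpow R N (p * j.+1) 1.

Lemma plc_seriesK N : eq_upto N (plc_series R N p N * pl_denom N) 1.
Proof. by rewrite -big_split; apply: eq_upto_prod1 => j; apply: invpowK. Qed.

Lemma subX_pchar m : (1 - 'X^m) ^+ p = 1 - 'X^(p * m) :> {poly R}.
Proof.
have pcharRp' : p \in [pchar {poly R}] by rewrite pchar_poly.
rewrite -(pFrobenius_autE pcharRp') pFrobenius_autB_comm; last exact: mulrC.
by rewrite pFrobenius_aut1 pFrobenius_autE -exprM mulnC.
Qed.

Lemma pl_denomM_numer N :
  pl_denom N * pl_numer N = \prod_(j < N) (1 - 'X^(p * j.+1)).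
Proof.
rewrite -big_split; apply: eq_bigr => j _ /=.
by rewrite -exprD subnKC ?geq_minl // subX_pchar.
Qed.

Lemma lacunary_invK N :
  eq_upto N (\prod_(j < N) (1 - 'X^(p * j.+1)) * lacunary_inv N) 1.
Proof.
rewrite -big_split; apply: eq_upto_prod1 => j /=.
by rewrite mulrC -[X in _ * X]expr1; apply: invpowK; rewrite muln_gt0 p_gt0.
Qed.

Lemma plc_series_factor N :
  eq_upto N (plc_series R N p N) (pl_numer N * lacunary_inv N).
Proof.
have := eq_uptoM (@eq_upto_refl R N (plc_series R N p N)) (eq_upto_sym (@lacunary_invK N)).
rewrite mulr1 -pl_denomM_numer !mulrA => /eq_upto_trans; apply.
have := eq_uptoM (eq_uptoM (@plc_seriesK N) (@eq_upto_refl R N (pl_numer N)))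
  (@eq_upto_refl R N (lacunary_inv N)).
by rewrite mul1r.
Qed.

Definition p_sparse (a : {poly R}) := forall i, ~~ (p %| i)%N -> a`_i = 0.

Lemma lacunary_inv_sparse N : p_sparse (lacunary_inv N).
Proof.
apply: (big_ind p_sparse).
- by move=> [|i]; rewrite ?dvdn0 // coef1.
- move=> a b sp_a sp_b i ndvd_i; rewrite coefM big1 // => j _.
  have [dvd_j | ndvd_j] := boolP (p %| j)%N; last by rewrite sp_a ?mul0r.
  rewrite sp_b ?mulr0 //; apply: contra ndvd_i => dvd_ij.
  by rewrite -(subnK (_ : j <= i)%N) ?dvdn_add // -ltnS.
- move=> j _ i ndvd_i; rewrite coef_poly; case: ifP => // _; case: ifP => // dvd_i.
  by case/negP: ndvd_i; apply: dvdn_trans dvd_i; apply: dvdn_mulr.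
Qed.

Lemma pl_coef_residue N t r : (r < p)%N -> (p * t + r <= N)%N ->
  (plc p N (p * t + r))%:R =
    \sum_(i < t.+1) (lacunary_inv N)`_(p * i) * (pl_numer N)`_(p * (t - i) + r).
Proof.
move=> lt_rp le_N; rewrite -(coef_plc_series _ _ _ le_N) (plc_series_factor le_N).
rewrite mulrC coefM.
pose F j := (lacunary_inv N)`_j * (pl_numer N)`_(p * t + r - j).
rewrite (eq_bigr (fun j : 'I_(p * t + r).+1 => if (p %| j)%N then F j else 0)).
  rewrite sum_multiples // mulnC divnMDl // divn_small // addn0.
  apply: eq_bigr => i _; congr (_ * (pl_numer N)`_ _).
  have : (p * i <= p * t)%N by rewrite leq_pmul2l // -ltnS.
  by rewrite mulnBr; lia.
by move=> j _; case: ifP => // ndvd_j; rewrite /F lacunary_inv_sparse ?ndvd_j ?mul0r.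
Qed.

Lemma pl_numer_small N : (p.-1 <= N)%N -> pl_numer N = pl_numer p.-1.
Proof.
move=> le_pN; rewrite /pl_numer -(subnKC le_pN) big_split_ord /=.
rewrite [X in _ * X]big1 ?mulr1 // => j _.
by rewrite (minn_idPl _) ?subnn ?expr0 //; lia.
Qed.

Lemma pl_sum_eq_of_numer (sa sb : seq nat) n :
  all (fun a => a < p)%N sa -> all (fun b => b < p)%N sb ->
  (forall t, \sum_(a <- sa) (pl_numer p.-1)`_(p * t + a) =
             \sum_(b <- sb) (pl_numer p.-1)`_(p * t + b)) ->
  (\sum_(a <- sa) pl p (p * n + a))%:R = (\sum_(b <- sb) pl p (p * n + b))%:R :> R.
Proof.
move=> lt_sa lt_sb numer_rel; pose N := (p * n + p)%N.
have expand s : all (fun a => a < p)%N s ->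
    (\sum_(a <- s) pl p (p * n + a))%:R = \sum_(i < n.+1) (lacunary_inv N)`_(p * i)
      * \sum_(a <- s) (pl_numer N)`_(p * (n - i) + a) :> R.
  move=> lt_s; rewrite natr_sum (eq_big_seq (fun a => \sum_(i < n.+1)
      (lacunary_inv N)`_(p * i) * (pl_numer N)`_(p * (n - i) + a))); last first.
    move=> a /(allP lt_s) lt_ap.
    by rewrite (@pl_plc _ _ N) ?pl_coef_residue // leq_add2l ltnW.
  by rewrite exchange_big /=; apply: eq_bigr => i _; rewrite mulr_sumr.
rewrite !expand // pl_numer_small ?(leq_trans (leq_pred p)) ?leq_addl //.
by apply: eq_bigr => i _; rewrite numer_rel.
Qed.

End Frobenius.

Fixpoint poly_of_ints (R : comNzRingType) (cs : seq int) : {poly R} :=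
  if cs is c :: cs' then c%:~R%:P + 'X * poly_of_ints R cs' else 0.

Lemma coef_poly_of_ints (R : comNzRingType) cs i : (poly_of_ints R cs)`_i = (cs`_i)%:~R.
Proof.
elim: cs i => [|c cs IH] [|i] /=; rewrite ?coef0 ?nth_nil ?coefD ?coefC ?coefXM //=.
- by rewrite addr0.
- by rewrite add0r IH.
Qed.

Definition residue_sum (cs : seq int) p t (s : seq nat) : int :=
  foldr +%R 0 [seq cs`_(p * t + a) | a <- s].

Lemma residue_sumE cs p t s : residue_sum cs p t s = \sum_(a <- s) cs`_(p * t + a).
Proof. by rewrite /residue_sum foldrE big_map. Qed.

Lemma residue_sum_eq0 cs p t s : (size cs <= p * t)%N -> residue_sum cs p t s = 0.
Proof.
move=> le_cs; rewrite residue_sumE big1 // => a _.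
by rewrite nth_default // (leq_trans le_cs) ?leq_addr.
Qed.

(* Classes [t > size cs %/ p] read past the end of [cs], so they need no check. *)
Definition residue_relation p (cs : seq int) (sa sb : seq nat) : bool :=
  all (fun t => (p %| residue_sum cs p t sa - residue_sum cs p t sb)%Z)
      (iota 0 (size cs %/ p).+1).

Lemma pl_congr_of_numer p cs sa sb : prime p ->
  (forall R : comNzRingType, pl_numer R p p.-1 = poly_of_ints R cs) ->
  all (fun a => a < p)%N sa -> all (fun b => b < p)%N sb ->
  residue_relation p cs sa sb ->
  forall n, (\sum_(a <- sa) pl p (p * n + a) = \sum_(b <- sb) pl p (p * n + b) %[mod p])%N.
Proof.
move=> p_pr numerE lt_sa lt_sb numer_check n.
have pcharFp := pchar_Fp p_pr.
have numer_rel t : \sum_(a <- sa) (pl_numer 'F_p p p.-1)`_(p * t + a) =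
                   \sum_(b <- sb) (pl_numer 'F_p p p.-1)`_(p * t + b).
  rewrite numerE; under eq_bigr do rewrite coef_poly_of_ints.
  under [RHS]eq_bigr do rewrite coef_poly_of_ints.
  rewrite -!rmorph_sum -!residue_sumE; apply/eqP; rewrite -subr_eq0 -rmorphB; apply/eqP.
  have [le_t | lt_t] := leqP t (size cs %/ p).
    have t_in : t \in iota 0 (size cs %/ p).+1 by rewrite mem_iota ltnS le_t.
    have /dvdzP[k ->] := allP numer_check t t_in.
    by rewrite rmorphM /= -[X in _ * X]/(p%:R) (pcharf0 pcharFp) mulr0.
  have le_cs : (size cs <= p * t)%N.
    by rewrite ltnW // (leq_trans (ltn_ceil _ (prime_gt0 p_pr))) // mulnC leq_mul2l lt_t orbT.
  by rewrite !residue_sum_eq0 ?subrr.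
have := pl_sum_eq_of_numer pcharFp n lt_sa lt_sb numer_rel.
by move/(congr1 (@nat_of_ord _)); rewrite !val_Fp_nat.
Qed.

Definition numer2 : seq int := [:: 1; -1]%Z.
Definition numer3 : seq int := [:: 1; -2; 0; 2; -1]%Z.
Definition numer5 : seq int :=
  [:: 1; -4; 3; 6; -7; -2; -4; 10; 6; -10; 2; -10; 6; 10; -4; -2; -7; 6; 3; -4; 1]%Z.
Definition numer7 : seq int :=
  [:: 1; -6; 10; 6; -29; 10; 13; 22; -17; -46; 38; -34; 40; 50; -34; -34; -49; 46;
      -25; 50; 71; -2; -116; -62; 97; -68; 96; 36; 0; -36; -96; 68; -97; 62; 116;
      2; -71; -50; 25; -46; 49; 34; 34; -50; -40; 34; -38; 46; 17; -22; -13; -10;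
      29; -6; -10; 6; -1]%Z.

Lemma pl_numer2E (R : comNzRingType) : pl_numer R 2 1 = poly_of_ints R numer2.
Proof. rewrite /pl_numer !big_ord_recr big_ord0 /=; ring. Qed.

Lemma pl_numer3E (R : comNzRingType) : pl_numer R 3 2 = poly_of_ints R numer3.
Proof. rewrite /pl_numer !big_ord_recr big_ord0 /=; ring. Qed.

Lemma pl_numer5E (R : comNzRingType) : pl_numer R 5 4 = poly_of_ints R numer5.
Proof. rewrite /pl_numer !big_ord_recr big_ord0 /=; ring. Qed.

Lemma pl_numer7E (R : comNzRingType) : pl_numer R 7 6 = poly_of_ints R numer7.
Proof. rewrite /pl_numer !big_ord_recr big_ord0 /=; ring. Qed.

Theorem theorem2 : forall n : nat,
  (pl 2 (2 * n + 1) = pl 2 (2 * n) %[mod 2]) /\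
  (pl 3 (3 * n + 2) = 0 %[mod 3]) /\
  (pl 3 (3 * n + 1) = pl 3 (3 * n) %[mod 3]) /\
  (pl 5 (5 * n + 2) = pl 5 (5 * n + 4) %[mod 5]) /\
  (pl 5 (5 * n + 1) = pl 5 (5 * n + 3) %[mod 5]) /\
  (pl 7 (7 * n + 2) + pl 7 (7 * n + 3) = pl 7 (7 * n + 4) + pl 7 (7 * n + 5) %[mod 7]).
Proof.
move=> n.
have := pl_congr_of_numer (sa := [:: 1]) (sb := [:: 0]) (erefl : prime 2)
  pl_numer2E erefl erefl erefl n.
have := pl_congr_of_numer (sa := [:: 2]) (sb := [::]) (erefl : prime 3)
  pl_numer3E erefl erefl erefl n.
have := pl_congr_of_numer (sa := [:: 1]) (sb := [:: 0]) (erefl : prime 3)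
  pl_numer3E erefl erefl erefl n.
have := pl_congr_of_numer (sa := [:: 2]) (sb := [:: 4]) (erefl : prime 5)
  pl_numer5E erefl erefl erefl n.
have := pl_congr_of_numer (sa := [:: 1]) (sb := [:: 3]) (erefl : prime 5)
  pl_numer5E erefl erefl erefl n.
have := pl_congr_of_numer (sa := [:: 2; 3]) (sb := [:: 4; 5]) (erefl : prime 7)
  pl_numer7E erefl erefl erefl n.
by rewrite !big_cons !big_nil !addn0.
Qed.
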